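(* Let $k$ be a binary kernel on a non-empty set $\mathcal X$. Then for all $x,y\in\mathcal X$: if $x\sim_k y$ then $x\sim_k x$.
   Context: A kernel on $\mathcal X$ is a symmetric positive semidefinite function $k:\mathcal X\times\mathcal X\to\mathbb R$. A kernel $k$ is binary if $k(x,y)\in\{0,1\}$ for all $x,y\in\mathcal X$. The relation induced by a binary kernel $k$ is $\sim_k=\{(x,y)\in\mathcal X\times\mathcal X : k(x,y)=1\}$. *)

From Stdlib Require Import Reals List.
Open Scope R_scope.

(* Double sum  sum_i sum_j c_i c_j k(x_i, x_j) over a finite family given as
   a list of (coefficient, point) pairs. *)
Definition gram_form {X : Type} (k : X -> X -> R) (l : list (R * X)) : R :=
  fold_right Rplus 0
    (map (fun p => fold_right Rplus 0
            (map (fun q => fst p * fst q * k (snd p) (snd q)) l)) l).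

Definition is_kernel {X : Type} (k : X -> X -> R) : Prop :=
  (forall x y, k x y = k y x) /\
  (forall l : list (R * X), 0 <= gram_form k l).

Definition is_binary_kernel {X : Type} (k : X -> X -> R) : Prop :=
  is_kernel k /\ (forall x y, k x y = 0 \/ k x y = 1).

Definition krel {X : Type} (k : X -> X -> R) (x y : X) : Prop := k x y = 1.

(* For a positive semidefinite kernel, k(x,x) = 0 forces k(x,y) = 0: the Gram
   form of (-t, x), (1, y) equals k(y,y) - 2 t k(x,y), which would become
   negative for a suitable t.  A binary kernel with k(x,y) = 1 therefore has
   k(x,x) <> 0, i.e. k(x,x) = 1. *)
From Stdlib Require Import Reals List Lra.
Open Scope R_scope.

Lemma gram_form_pair {X : Type} (k : X -> X -> R) (a b : R) (x y : X) :
  gram_form k ((a, x) :: (b, y) :: nil)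
  = a * a * k x x + a * b * k x y + b * a * k y x + b * b * k y y.
Proof. unfold gram_form; simpl; ring. Qed.

Lemma kernel_pair_nonneg {X : Type} (k : X -> X -> R) (a b : R) (x y : X) :
  is_kernel k -> 0 <= a * a * k x x + 2 * a * b * k x y + b * b * k y y.
Proof.
  intros [k_sym k_psd].
  specialize (k_psd ((a, x) :: (b, y) :: nil)).
  rewrite gram_form_pair, (k_sym y x) in k_psd; lra.
Qed.

Lemma kernel_diag0_offdiag0 {X : Type} (k : X -> X -> R) (x y : X) :
  is_kernel k -> k x x = 0 -> k x y = 0.
Proof.
  intros k_ker kxx0.
  destruct (Req_dec (k x y) 0) as [|kxy_neq0]; [assumption | exfalso].
  set (t := (k y y + 1) / (2 * k x y)).
  assert (quad := kernel_pair_nonneg k (- t) 1 x y k_ker).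
  replace (- t * - t * k x x + 2 * - t * 1 * k x y + 1 * 1 * k y y) with (-1)
    in quad by (rewrite kxx0; unfold t; field; exact kxy_neq0).
  lra.
Qed.

Theorem lemma1 (X : Type) (x0 : X) (k : X -> X -> R)
  (hk : is_binary_kernel k) :
  forall x y : X, krel k x y -> krel k x x.
Proof.
  intros x y kxy1; unfold krel in *.
  destruct hk as [k_ker k_bin].
  destruct (k_bin x x) as [kxx0 | kxx1]; [exfalso | exact kxx1].
  rewrite (kernel_diag0_offdiag0 k x y k_ker kxx0) in kxy1; lra.
Qed.
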